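(* Let $\mathcal{H}_C,\mathcal{H}_{C'}$ be finite-dimensional Hilbert spaces and let $\{\sigma_{abd|xyw}\}$ (with $a,b,d,x,y,w$ ranging over finite sets) be a (non-signalling) assemblage of positive semidefinite operators on $\mathcal{H}_{C}\otimes\mathcal{H}_{C'}$, prepared for Charlie after Alice, Bob and Dani, with inputs $x,y,w$, produce outputs $a,b,d$. Suppose that: (i) for all $x,y$: $\sigma_{d|w}=\mathrm{tr}_{C'}\big\{\sum_{a,b}\sigma_{abd|xyw}\big\}$ for all $d,w$; (ii) $\sum_{a,b}\sigma_{abd|xyw}=\psi\otimes\sigma_{d|w}$ for all $d,w,x,y$, where $\{\sigma_{d|w}\}_{d,w}$ is an extremal assemblage (of operators on $\mathcal{H}_C$) and $\psi$ is (the density operator of) a pure state on $\mathcal{H}_{C'}$. Then $\sigma_{abd|xyw}=\sigma_{ab|xy}\otimes\sigma_{d|w}$ for all $a,b,d,x,y,w$, where $\sigma_{ab|xy}=\mathrm{tr}_C\big\{\sum_d\sigma_{abd|xyw}\big\}$ is an operator on $\mathcal{H}_{C'}$ independent of $w$.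
   Context: An assemblage $\{\sigma_{abd|xyw}\}$ is a family of positive semidefinite operators whose sum over all outputs $a,b,d$ is a density operator independent of the inputs, and which satisfies the no-signalling conditions: summing over the output of any subset of the parties yields operators independent of those parties' inputs (in particular $p(ab|xyw)=\mathrm{tr}\sum_d\sigma_{abd|xyw}$ is independent of $w$). A bipartite assemblage $\{\sigma_{d|w}\}$ is a family of positive semidefinite operators with $\sum_d\sigma_{d|w}$ a density operator independent of $w$; it is extremal if it cannot be written as a nontrivial convex combination of other assemblages with the same input and output sets. In the tensor products the factor $\psi$ (resp. $\sigma_{ab|xy}$) acts on $\mathcal{H}_{C'}$ and $\sigma_{d|w}$ acts on $\mathcal{H}_C$. *)

(* Operators on finite-dimensional complex Hilbert spaces are
   square matrices over an arbitrary numClosedFieldType C (e.g. the complex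
   numbers); tensor products are Kronecker products (real_closed's mxtens). *)
From HB Require Import structures.
From mathcomp Require Import all_boot all_order all_algebra.
From mathcomp.real_closed Require Export mxtens.
Set Implicit Arguments. Unset Strict Implicit. Unset Printing Implicit Defensive.
Import Order.TTheory GRing.Theory Num.Theory.
Local Open Scope ring_scope.

Section QDefs.
Variable C : numClosedFieldType.

Definition adjmx m n (M : 'M[C]_(m, n)) : 'M[C]_(n, m) := map_mx Num.conj (M^T).

Definition psd n (M : 'M[C]_n) : Prop :=
  adjmx M = M /\ forall v : 'rV[C]_n, 0 <= (v *m M *m adjmx v) 0 0.

Definition density n (M : 'M[C]_n) : Prop := psd M /\ \tr M = 1.

Definition pure_state n (M : 'M[C]_n) : Prop :=
  exists u : 'cV[C]_n, (adjmx u *m u) 0 0 = 1 /\ M = u *m adjmx u.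

Definition ptrace1 n1 n2 (M : 'M[C]_(n1 * n2)) : 'M[C]_n2 :=
  \matrix_(i, j) \sum_(k < n1) M (mxtens_index (k, i)) (mxtens_index (k, j)).
Definition ptrace2 n1 n2 (M : 'M[C]_(n1 * n2)) : 'M[C]_n1 :=
  \matrix_(i, j) \sum_(k < n2) M (mxtens_index (i, k)) (mxtens_index (j, k)).

Definition assemblage2 (D W : finType) n (s : D -> W -> 'M[C]_n) : Prop :=
  (forall d w, psd (s d w)) /\
  exists rho : 'M[C]_n, density rho /\ forall w, \sum_d s d w = rho.

Definition extremal_assemblage2 (D W : finType) n (s : D -> W -> 'M[C]_n) : Prop :=
  assemblage2 s /\
  forall (p : C) (s1 s2 : D -> W -> 'M[C]_n),
    0 < p -> p < 1 -> assemblage2 s1 -> assemblage2 s2 ->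
    (forall d w, s d w = p *: s1 d w + (1 - p) *: s2 d w) ->
    s1 = s /\ s2 = s.

Definition assemblage3 (A B D X Y W : finType) n
    (s : A -> B -> D -> X -> Y -> W -> 'M[C]_n) : Prop :=
  (forall a b d x y w, psd (s a b d x y w)) /\
  (exists rho : 'M[C]_n, density rho /\
     forall x y w, \sum_a \sum_b \sum_d s a b d x y w = rho) /\
  (forall b d x x' y w, \sum_a s a b d x y w = \sum_a s a b d x' y w) /\
  (forall a d x y y' w, \sum_b s a b d x y w = \sum_b s a b d x y' w) /\
  (forall a b x y w w', \sum_d s a b d x y w = \sum_d s a b d x y w') /\
  (forall d x x' y y' w,
     \sum_a \sum_b s a b d x y w = \sum_a \sum_b s a b d x' y' w) /\
  (forall b x x' y w w',
     \sum_a \sum_d s a b d x y w = \sum_a \sum_d s a b d x' y w') /\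
  (forall a x y y' w w',
     \sum_b \sum_d s a b d x y w = \sum_b \sum_d s a b d x y' w').

End QDefs.

(* Write psi = |u><u| and K = <u| (x) 1, so that K K^* = 1 and
   psi (x) M = K^* M K.  Every sigma_{abd|xyw} is dominated by
   sum_{a,b} sigma_{abd|xyw} = K^* sigma_{d|w} K, hence lives on the range of
   K^* K and equals K^* tau_{d|w} K with tau_{d|w} = K sigma_{abd|xyw} K^*.
   For fixed a, b, x, y, no-signalling makes tau a sub-assemblage of the
   extremal assemblage sigma_{d|w}, so tau = p sigma_{d|w} and
   sigma_{abd|xyw} = (p psi) (x) sigma_{d|w}; tracing out C identifies p psi
   with sigma_{ab|xy}. *)

From mathcomp Require Import all_boot all_order all_algebra.
From mathcomp.real_closed Require Import mxtens.
From mathcomp Require Import ring.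
Import Order.TTheory GRing.Theory Num.Theory.
Set Implicit Arguments. Unset Strict Implicit. Unset Printing Implicit Defensive.
Local Open Scope ring_scope.

Section Adjoint.
Variable C : numClosedFieldType.

Lemma adjmxE m n (M : 'M[C]_(m, n)) i j : adjmx M i j = (M j i)^*.
Proof. by rewrite !mxE. Qed.

Lemma adjmxK m n (M : 'M[C]_(m, n)) : adjmx (adjmx M) = M.
Proof. by apply/matrixP=> i j; rewrite !adjmxE conjCK. Qed.

Lemma adjmxM m n p (A : 'M[C]_(m, n)) (B : 'M[C]_(n, p)) :
  adjmx (A *m B) = adjmx B *m adjmx A.
Proof. by rewrite /adjmx trmx_mul map_mxM. Qed.

Lemma adjmxD m n (A B : 'M[C]_(m, n)) : adjmx (A + B) = adjmx A + adjmx B.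
Proof. by rewrite /adjmx linearD map_mxD. Qed.

Lemma adjmxB m n (A B : 'M[C]_(m, n)) : adjmx (A - B) = adjmx A - adjmx B.
Proof. by rewrite /adjmx linearB map_mxB. Qed.

Lemma adjmxZ m n (c : C) (A : 'M[C]_(m, n)) : adjmx (c *: A) = c^* *: adjmx A.
Proof. by rewrite /adjmx linearZ map_mxZ. Qed.

Lemma adjmx0 m n : adjmx (0 : 'M[C]_(m, n)) = 0.
Proof. by rewrite /adjmx trmx0 map_mx0. Qed.

Lemma adjmx_delta n (j : 'I_n) : adjmx (delta_mx 0 j : 'rV[C]_n) = delta_mx j 0.
Proof. by apply/matrixP=> a b; rewrite adjmxE !mxE rmorph_nat andbC. Qed.

End Adjoint.

Section PositiveSemidefinite.
Variable C : numClosedFieldType.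

Definition qform n (M : 'M[C]_n) (v : 'rV[C]_n) : C := (v *m M *m adjmx v) 0 0.

Lemma qformB n (M N : 'M[C]_n) v : qform (M - N) v = qform M v - qform N v.
Proof. by rewrite /qform -!trace_mx11 mulmxBr mulmxBl linearB. Qed.

Lemma qform_delta n (M : 'M[C]_n) i : qform M (delta_mx 0 i) = M i i.
Proof. by rewrite /qform adjmx_delta -rowE -colE !mxE. Qed.

Lemma qform_conjmx m n (K : 'M[C]_(m, n)) (M : 'M[C]_n) v :
  qform (K *m M *m adjmx K) v = qform M (v *m K).
Proof. by rewrite /qform adjmxM !mulmxA. Qed.

Lemma psd_qform_eq0 n (M : 'M[C]_n) v : psd M -> qform M v = 0 -> v *m M = 0.
Proof.
move=> [M_herm M_ge0] Mv0.
suff vMz0 : forall z : 'rV[C]_n, (v *m M *m adjmx z) 0 0 = 0.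
  apply/matrixP=> i j; rewrite ord1 [RHS]mxE.
  by have := vMz0 (delta_mx 0 j); rewrite adjmx_delta -colE mxE.
move=> z; set c := (v *m M *m adjmx z) 0 0; set k := qform M z.
have k_ge0 : 0 <= k by exact: M_ge0.
have k1_ge0 : 0 <= k + 1 by rewrite addr_ge0.
have czv : (z *m M *m adjmx v) 0 0 = c^*.
  by rewrite -[RHS]adjmxE !adjmxM adjmxK M_herm mulmxA.
(* Expanding the form at [(k + 1) v - c z] gives [- |c|^2 (k + 2)]. *)
have := M_ge0 ((k + 1) *: v - c *: z).
rewrite -trace_mx11 adjmxB !adjmxZ (geC0_conj k1_ge0) !mulmxBl !mulmxBr.
rewrite -!scalemxAl -!scalemxAr !linearB !linearZ /= !trace_mx11.
rewrite -/(qform M v) -/(qform M z) Mv0 czv -/c -/k.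
have -> : (k + 1) * ((k + 1) * 0) - (k + 1) * (c^* * c) -
    (c * ((k + 1) * c^*) - c * (c^* * k)) = - ((c * c^*) * (k + 2)) by ring.
rewrite oppr_ge0 pmulr_lle0; last by rewrite ltr_wpDl.
by move=> cc_le0; apply/eqP; rewrite -mul_conjC_eq0 eq_le cc_le0 mul_conjC_ge0.
Qed.

Lemma psd_trace_ge0 n (M : 'M[C]_n) : psd M -> 0 <= \tr M.
Proof.
move=> [_ M_ge0]; rewrite /mxtrace; apply: sumr_ge0 => i _.
by rewrite -qform_delta; apply: M_ge0.
Qed.

Lemma psd_trace_eq0 n (M : 'M[C]_n) : psd M -> \tr M = 0 -> M = 0.
Proof.
move=> M_psd trM0; have [_ M_ge0] := M_psd.
have diag0 i : M i i = 0.
  apply: (psumr_eq0P (P := predT) (F := fun i => M i i)) => // j _.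
  by rewrite -qform_delta; apply: M_ge0.
apply/row_matrixP=> i; rewrite row0 rowE; apply: psd_qform_eq0 => //.
by rewrite qform_delta.
Qed.

Lemma psd0 n : psd (0 : 'M[C]_n).
Proof. by split=> [|v]; rewrite ?adjmx0 // /qform mulmx0 mul0mx mxE. Qed.

Lemma psdD n (M N : 'M[C]_n) : psd M -> psd N -> psd (M + N).
Proof.
move=> [M_herm M_ge0] [N_herm N_ge0]; split=> [|v].
  by rewrite adjmxD M_herm N_herm.
by rewrite /qform mulmxDr mulmxDl mxE addr_ge0.
Qed.

Lemma psd_sum n (I : Type) (r : seq I) (P : pred I) (F : I -> 'M[C]_n) :
  (forall i, P i -> psd (F i)) -> psd (\sum_(i <- r | P i) F i).
Proof.
by move=> F_psd; apply: big_rec => [|i M Pi]; [exact: psd0 | exact/psdD/F_psd].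
Qed.

Lemma psdZ n (a : C) (M : 'M[C]_n) : 0 <= a -> psd M -> psd (a *: M).
Proof.
move=> a_ge0 [M_herm M_ge0]; split=> [|v]; first by rewrite adjmxZ M_herm geC0_conj.
by rewrite /qform -scalemxAr -scalemxAl mxE mulr_ge0.
Qed.

Lemma psd_conjmx m n (K : 'M[C]_(m, n)) (M : 'M[C]_n) :
  psd M -> psd (K *m M *m adjmx K).
Proof.
move=> [M_herm M_ge0]; split=> [|v]; first by rewrite !adjmxM adjmxK M_herm mulmxA.
by have := M_ge0 (v *m K); rewrite -/(qform M (v *m K)) -qform_conjmx.
Qed.

Lemma psd_sum2B (I J : finType) n (F : I -> J -> 'M[C]_n) i j :
  (forall i j, psd (F i j)) -> psd (\sum_i \sum_j F i j - F i j).
Proof.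
move=> F_psd; rewrite (bigD1 i) //= (bigD1 j) //= -addrA addrAC subrr add0r.
apply: psdD; first exact: psd_sum (fun k _ => F_psd i k).
by apply: psd_sum => k _; apply: psd_sum => l _.
Qed.

Lemma psd_sum_trace_eq0 n (I : finType) (F : I -> 'M[C]_n) :
  (forall i, psd (F i)) -> \tr (\sum_i F i) = 0 -> forall i, F i = 0.
Proof.
move=> F_psd; rewrite raddf_sum => tr0 i; apply: psd_trace_eq0 => //.
apply: (psumr_eq0P (P := predT) (F := fun i => \tr (F i))) => // j _.
exact: psd_trace_ge0.
Qed.

(* In the Loewner order, [T <= K^* S K] forces [T] to live on the range of
   the projection [K^* K]. *)
Lemma psd_dominated_compress m n (K : 'M[C]_(m, n)) (S : 'M[C]_m) (T : 'M[C]_n) :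
  K *m adjmx K = 1%:M -> psd T -> psd (adjmx K *m S *m K - T) ->
  T = adjmx K *m (K *m T *m adjmx K) *m K.
Proof.
move=> KK T_psd ST_psd; set P := adjmx K *m K.
have PT : P *m T = T.
  suff : (P - 1%:M) *m T = 0 by rewrite mulmxBl mul1mx => /eqP; rewrite subr_eq0 => /eqP.
  apply/row_matrixP => i; rewrite row0 rowE mulmxA; apply: psd_qform_eq0 => //.
  set v := delta_mx 0 i *m (P - 1%:M).
  have vK0 : v *m adjmx K = 0.
    by rewrite -mulmxA mulmxBl mul1mx -mulmxA KK mulmx1 subrr mulmx0.
  have [[_ T_ge0] [_ ST_ge0]] := (T_psd, ST_psd).
  apply/eqP; rewrite eq_le T_ge0 andbT.
  have := ST_ge0 v; rewrite -/(qform _ v) qformB /qform !mulmxA vK0 !mul0mx mxE.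
  by rewrite sub0r oppr_ge0.
have TP : T *m P = T.
  by have := congr1 (@adjmx C n n) PT; rewrite !adjmxM adjmxK (proj1 T_psd).
by rewrite !mulmxA -/P PT -mulmxA -/P TP.
Qed.

End PositiveSemidefinite.

Lemma sum_delta_mul (R : pzSemiRingType) n (k : 'I_n) (F : 'I_n -> R) :
  \sum_l (k == l)%:R * F l = F k.
Proof.
rewrite (bigD1 k) //= eqxx mul1r big1 ?addr0 // => l; rewrite eq_sym => /negPf ->.
by rewrite mul0r.
Qed.

Lemma sum_mxtens (R : nmodType) m n (F : 'I_(m * n) -> R) :
  \sum_k F k = \sum_(i < m) \sum_(j < n) F (mxtens_index (i, j)).
Proof.
rewrite pair_big (reindex (@mxtens_index m n)) /=; last first.
  by exists (@mxtens_unindex m n) => x _; rewrite ?mxtens_indexK ?mxtens_unindexK.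
by apply: eq_bigr => -[i j].
Qed.

Section PartialBra.
Variable C : numClosedFieldType.

(* [partial_bra n u] is the operator <u| (x) 1 from H_m (x) H_n onto H_n. *)
Definition partial_bra m n (u : 'cV[C]_m) : 'M[C]_(n, m * n) :=
  \matrix_(k, j) ((u (mxtens_unindex j).1 0)^* * (k == (mxtens_unindex j).2)%:R).

Lemma partial_braE m n (u : 'cV[C]_m) k i l :
  partial_bra n u k (mxtens_index (i, l)) = (u i 0)^* * (k == l)%:R.
Proof. by rewrite mxE mxtens_indexK. Qed.

Lemma partial_bra_isometry m n (u : 'cV[C]_m) :
  (adjmx u *m u) 0 0 = 1 -> partial_bra n u *m adjmx (partial_bra n u) = 1%:M.
Proof.
move=> u_unit; apply/matrixP => k k'; rewrite mxE sum_mxtens [RHS]mxE.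
under eq_bigr => i _ do under eq_bigr => l _ do
  rewrite adjmxE !partial_braE rmorphM /= conjCK conjC_nat mulrAC mulrC.
under eq_bigr => i _ do rewrite sum_delta_mul mulrA.
rewrite -mulr_suml eq_sym -[RHS]mul1r -u_unit mxE; congr (_ * _).
by apply: eq_bigr => i _; rewrite adjmxE.
Qed.

Lemma tens_pure m n (u : 'cV[C]_m) (M : 'M[C]_n) :
  (u *m adjmx u) *t M = adjmx (partial_bra n u) *m M *m partial_bra n u.
Proof.
apply/matrixP => p q.
case: p / (mxtens_indexP p) => i k; case: q / (mxtens_indexP q) => j l.
rewrite tensmxE [RHS]mxE.
under eq_bigr => b _ do rewrite partial_braE mxE.
under eq_bigr => b _ do under eq_bigr => a _ do
  rewrite adjmxE partial_braE rmorphM /= conjCK conjC_nat mulrAC mulrC eq_sym.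
under eq_bigr => b _ do rewrite sum_delta_mul mulrC mulrAC mulrC eq_sym.
by rewrite sum_delta_mul mxE big_ord1 adjmxE mulrCA mulrA.
Qed.

End PartialBra.

Lemma tensmxZl (R : pzRingType) m n p q (a : R) (A : 'M[R]_(m, n)) (B : 'M[R]_(p, q)) :
  (a *: A) *t B = a *: (A *t B).
Proof.
apply/matrixP => r s.
case: r / (mxtens_indexP r) => i k; case: s / (mxtens_indexP s) => j l.
by rewrite tensmxE [RHS]mxE tensmxE mxE mulrA.
Qed.

Lemma ptrace2_sum_tensmx (C : numClosedFieldType) (I : finType) m n
    (A : 'M[C]_m) (B : I -> 'M[C]_n) :
  ptrace2 (\sum_i A *t B i) = \tr (\sum_i B i) *: A.
Proof.
apply/matrixP => i j; rewrite !mxE mulr_suml; apply: eq_bigr => k _.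
rewrite !summxE mulr_suml; apply: eq_bigr => d _.
by rewrite tensmxE mulrC.
Qed.

Section ExtremalAssemblage.
Variables (C : numClosedFieldType) (D W : finType) (n : nat).

Lemma assemblage2_normalize (t : D -> W -> 'M[C]_n) (rho : 'M[C]_n) :
  (forall d w, psd (t d w)) -> psd rho -> (forall w, \sum_d t d w = rho) ->
  \tr rho != 0 -> assemblage2 (fun d w => (\tr rho)^-1 *: t d w).
Proof.
move=> t_psd rho_psd sum_t tr_neq0.
have inv_ge0 : 0 <= (\tr rho)^-1 by rewrite invr_ge0 psd_trace_ge0.
split=> [d w|]; first exact: psdZ.
exists ((\tr rho)^-1 *: rho); split=> [|w]; last by rewrite -scaler_sumr sum_t.
by split; [exact: psdZ | rewrite mxtraceZ mulVf].
Qed.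

(* Otherwise [t] and [s - t], once normalised, would split [s] non-trivially. *)
Lemma extremal_assemblage2_proportional (s t : D -> W -> 'M[C]_n) :
  extremal_assemblage2 s ->
  (forall d w, psd (t d w)) -> (forall d w, psd (s d w - t d w)) ->
  (forall w w', \sum_d t d w = \sum_d t d w') ->
  exists p : C, forall d w, t d w = p *: s d w.
Proof.
move=> [[_ [rho [[_ tr_rho] sum_s]]] s_extremal] t_psd r_psd t_nosig.
have [w0 _ | W0] := pickP (@predT W); last by exists 0 => d w; have := W0 w.
set tau := \sum_d t d w0.
have sum_t w : \sum_d t d w = tau by exact: t_nosig.
have sum_r w : \sum_d (s d w - t d w) = rho - tau by rewrite sumrB sum_s sum_t.
have tau_psd : psd tau by exact: psd_sum.
have rho_tau_psd : psd (rho - tau) by rewrite -(sum_r w0); exact: psd_sum.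
have tr_rho_tau : \tr (rho - tau) = 1 - \tr tau by rewrite linearB /= tr_rho.
have [tr_tau0 | tr_tau_neq0] := eqVneq (\tr tau) 0.
  exists 0 => d w; rewrite scale0r.
  by apply: (psd_sum_trace_eq0 (F := t^~ w)) => //; rewrite sum_t.
have [tr_r0 | tr_r_neq0] := eqVneq (\tr (rho - tau)) 0.
  exists 1 => d w; apply/eqP; rewrite scale1r eq_sym -subr_eq0; apply/eqP.
  by apply: (psd_sum_trace_eq0 (F := fun d => s d w - t d w)) => //; rewrite sum_r.
set p := \tr tau.
have p_gt0 : 0 < p by rewrite lt_def tr_tau_neq0 psd_trace_ge0.
have p_lt1 : p < 1.
  by rewrite -subr_gt0 -tr_rho_tau lt_def tr_r_neq0 psd_trace_ge0.
have q_neq0 : 1 - p != 0 by rewrite -tr_rho_tau.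
have split_s d w : s d w = p *: (p^-1 *: t d w) +
    (1 - p) *: ((\tr (rho - tau))^-1 *: (s d w - t d w)).
  by rewrite tr_rho_tau !scalerA !mulfV // !scale1r addrC subrK.
have [t_s _] := s_extremal p _ _ p_gt0 p_lt1
  (assemblage2_normalize t_psd tau_psd sum_t tr_tau_neq0)
  (assemblage2_normalize r_psd rho_tau_psd sum_r tr_r_neq0) split_s.
exists p => d w; rewrite -(congr1 (fun f => f d w) t_s) /=.
by rewrite scalerA mulfV // scale1r.
Qed.

End ExtremalAssemblage.

Section PureMarginal.
Variables (C : numClosedFieldType) (nC nC' : nat) (A B D X Y W : finType).
Variables (sigma : A -> B -> D -> X -> Y -> W -> 'M[C]_(nC' * nC)).
Variables (sdw : D -> W -> 'M[C]_nC) (u : 'cV[C]_nC').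
Hypothesis sigma_psd : forall a b d x y w, psd (sigma a b d x y w).
Hypothesis sigma_nosig_d :
  forall a b x y w w', \sum_d sigma a b d x y w = \sum_d sigma a b d x y w'.
Hypothesis sum_ab_pure :
  forall d w x y, \sum_a \sum_b sigma a b d x y w = (u *m adjmx u) *t sdw d w.
Hypothesis sdw_extremal : extremal_assemblage2 sdw.
Hypothesis u_unit : (adjmx u *m u) 0 0 = 1.

Local Notation K := (partial_bra nC u).

Let KK : K *m adjmx K = 1%:M := partial_bra_isometry nC u_unit.

Let sum_ab_K d w x y : \sum_a \sum_b sigma a b d x y w = adjmx K *m sdw d w *m K.
Proof. by rewrite sum_ab_pure tens_pure. Qed.

Lemma sigma_compress a b d x y w :
  sigma a b d x y w = adjmx K *m (K *m sigma a b d x y w *m adjmx K) *m K.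
Proof.
apply: (psd_dominated_compress (S := sdw d w) KK (sigma_psd _ _ _ _ _ _)).
by rewrite -(sum_ab_K d w x y); exact: psd_sum2B.
Qed.

Lemma compressed_sigma_proportional a b x y :
  exists p : C, forall d w, K *m sigma a b d x y w *m adjmx K = p *: sdw d w.
Proof.
apply: extremal_assemblage2_proportional sdw_extremal _ _ _ => [d w | d w | w w'].
- exact: psd_conjmx.
- have -> : sdw d w = K *m (\sum_a \sum_b sigma a b d x y w) *m adjmx K.
    by rewrite sum_ab_K !mulmxA KK mul1mx -mulmxA KK mulmx1.
  by rewrite -mulmxBl -mulmxBr; apply: psd_conjmx; exact: psd_sum2B.
- by rewrite -!mulmx_suml -!mulmx_sumr (sigma_nosig_d a b x y w w').
Qed.

Lemma sigma_tens_factor a b x y :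
  exists p : C, forall d w, sigma a b d x y w = (p *: (u *m adjmx u)) *t sdw d w.
Proof.
have [p sigma_p] := compressed_sigma_proportional a b x y.
exists p => d w; rewrite sigma_compress sigma_p -scalemxAr -scalemxAl.
by rewrite -tens_pure tensmxZl.
Qed.

End PureMarginal.

Theorem mainTheorem2 (C : numClosedFieldType) (nC nC' : nat)
    (A B D X Y W : finType)
    (sigma : A -> B -> D -> X -> Y -> W -> 'M[C]_(nC' * nC))
    (sdw : D -> W -> 'M[C]_nC) (psi : 'M[C]_nC') :
  assemblage3 sigma ->
  (forall x y d w,
     sdw d w = ptrace1 (\sum_a \sum_b sigma a b d x y w)) ->
  (forall d w x y,
     \sum_a \sum_b sigma a b d x y w = psi *t sdw d w) ->
  extremal_assemblage2 sdw ->
  pure_state psi ->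
  exists sab : A -> B -> X -> Y -> 'M[C]_nC',
    (forall a b x y w, sab a b x y = ptrace2 (\sum_d sigma a b d x y w)) /\
    (forall a b d x y w, sigma a b d x y w = sab a b x y *t sdw d w).
Proof.
move=> [sigma_psd [_ [_ [_ [nosig_d _]]]]] _ sum_ab s_extremal [u [u_unit psi_u]].
subst psi.
have [[_ [rho [[_ tr_rho] sum_s]]] _] := s_extremal.
have [w0 _ | W0] := pickP (@predT W); last first.
  by exists (fun _ _ _ _ => 0); split=> [? ? ? ? w | ? ? ? ? ? w]; have := W0 w.
exists (fun a b x y => ptrace2 (\sum_d sigma a b d x y w0)).
split=> [a b x y w | a b d x y w]; first by rewrite (nosig_d a b x y w0 w).
have [p sigma_p] :=
  sigma_tens_factor sigma_psd nosig_d sum_ab s_extremal u_unit a b x y.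
rewrite (eq_bigr _ (fun d _ => sigma_p d w0)) ptrace2_sum_tensmx sum_s tr_rho.
by rewrite scale1r sigma_p.
Qed.
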